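(* In the setting described in the context (with $L=[0,1]$), let $q\in\{1,\dots,n\}$ and assume there exists $A\subseteq\mathcal C$ with $|A|=q$ and $\eta_q(A)=1$. Define $\mu^*:2^{\mathcal C}\to[0,1]$ by $\mu^*(\emptyset)=0$, $\mu^*(X)=\eta_q(X)$ if $0<|X|\le q$, and $\mu^*(X)=\max_{\emptyset\neq Y\subsetneq X,\ |Y|\le q}\eta_q(Y)$ if $|X|>q$. Then $\mu^*$ is the greatest (pointwise) among all $q$-maxitive capacities $\mu:2^{\mathcal C}\to[0,1]$ satisfying $\max_{1\le k\le N}|S_\mu(x^{(k)})-\alpha^{(k)}|=\Delta_q$.
   Context: Let $\mathcal C=\{1,\dots,n\}$ and $L=[0,1]$. A capacity is a map $\mu:2^{\mathcal C}\to[0,1]$ with $\mu(\emptyset)=0$, $\mu(\mathcal C)=1$, monotone for inclusion; it is $q$-maxitive if for all $X$ with $|X|>q$, $\mu(X)=\max_{Y\subsetneq X,\ |Y|\le q}\mu(Y)$. Sugeno integral: $S_\mu(x)=\max_{A\subseteq\mathcal C}\min(\min_{i\in A}x_i,\mu(A))$ with $\min_{i\in\emptyset}x_i=1$. Training data: $N$ pairs $(x^{(k)},\alpha^{(k)})$, $x^{(k)}\in[0,1]^n$, $\alpha^{(k)}\in[0,1]$. For nonempty $A$, $m_{k,A}=\min_{i\in A}x^{(k)}_i$. Write $t^+=\max(t,0)$. For $1\le i\le N$ and $0<|A|\le q$, let $\sigma_G(\alpha^{(i)},m_{l,A},\alpha^{(l)})=\min\big(\tfrac{(\alpha^{(i)}-\alpha^{(l)})^+}{2},(m_{l,A}-\alpha^{(l)})^+\big)$,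 $\delta_{i,A}=\max\big((\alpha^{(i)}-m_{i,A})^+,\max_{1\le l\le N}\sigma_G(\alpha^{(i)},m_{l,A},\alpha^{(l)})\big)$, $\delta_i=\min_{0<|A|\le q}\delta_{i,A}$, and $\Delta_q=\max_{1\le i\le N}\delta_i$. For $0<|A|\le q$, $\eta_q(A)=\min_{1\le k\le N}\big(m_{k,A}\to_G\min(\alpha^{(k)}+\Delta_q,1)\big)$, where $a\to_G b=1$ if $a\le b$ and $a\to_G b=b$ otherwise. *)

From mathcomp Require Import all_boot all_order all_algebra.
From mathcomp Require Import reals.
Set Implicit Arguments. Unset Strict Implicit. Unset Printing Implicit Defensive.
Import Order.TTheory GRing.Theory Num.Theory.
Local Open Scope ring_scope.

Section Defs.
Variable R : realType.

Definition posp (t : R) : R := Num.max t 0.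

Definition impG (a b : R) : R := if a <= b then 1 else b.

Definition minset n (x : 'I_n -> R) (A : {set 'I_n}) : R :=
  \big[Num.min/1]_(i in A) x i.

(* Sugeno integral; all terms are >= 0 for mu, x valued in [0,1],
   so 0 is a neutral element for this max *)
Definition sugeno n (mu : {set 'I_n} -> R) (x : 'I_n -> R) : R :=
  \big[Num.max/0]_(A : {set 'I_n}) Num.min (minset x A) (mu A).

Definition is_capacity n (mu : {set 'I_n} -> R) : Prop :=
  [/\ mu set0 = 0, mu setT = 1,
      (forall X, 0 <= mu X <= 1) &
      (forall X Y : {set 'I_n}, X \subset Y -> mu X <= mu Y)].

Definition q_maxitive n (q : nat) (mu : {set 'I_n} -> R) : Prop :=
  forall X : {set 'I_n}, (q < #|X|)%N ->
    mu X = \big[Num.max/0]_(Y : {set 'I_n} | (Y \proper X) && (#|Y| <= q)%N) mu Y.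

Variables (n N : nat) (x : 'I_N -> 'I_n -> R) (alpha : 'I_N -> R) (q : nat).

Definition mk (k : 'I_N) (A : {set 'I_n}) : R := minset (x k) A.

Definition sigmaG (ai mlA al : R) : R :=
  Num.min (posp (ai - al) / 2) (posp (mlA - al)).

Definition delta_iA (i : 'I_N) (A : {set 'I_n}) : R :=
  Num.max (posp (alpha i - mk i A))
          (\big[Num.max/0]_(l : 'I_N) sigmaG (alpha i) (mk l A) (alpha l)).

(* delta_i = min over 0 < |A| <= q (values lie in [0,1]) *)
Definition delta_i (i : 'I_N) : R :=
  \big[Num.min/1]_(A : {set 'I_n} | (0 < #|A| <= q)%N) delta_iA i A.

Definition Delta_q : R := \big[Num.max/0]_(i : 'I_N) delta_i i.

Definition eta_q (A : {set 'I_n}) : R :=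
  \big[Num.min/1]_(k : 'I_N) impG (mk k A) (Num.min (alpha k + Delta_q) 1).

Definition mu_star (X : {set 'I_n}) : R :=
  if X == set0 then 0
  else if (#|X| <= q)%N then eta_q X
  else \big[Num.max/0]_(Y : {set 'I_n} | [&& Y != set0, Y \proper X & (#|Y| <= q)%N])
         eta_q Y.

Definition fit_error (mu : {set 'I_n} -> R) : R :=
  \big[Num.max/0]_(k : 'I_N) `|sugeno mu (x k) - alpha k|.

End Defs.

From Pilot Require Import Defs.
From mathcomp Require Import all_boot all_order all_algebra.
From mathcomp Require Import reals lra.
Set Implicit Arguments. Unset Strict Implicit. Unset Printing Implicit Defensive.
Import Order.TTheory GRing.Theory Num.Theory.
Local Open Scope ring_scope.

(* A q-maxitive capacity attains its Sugeno integral on some A with |A| <= q.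
   If its error is E, the witness A for x^(i) satisfies mu A >= alpha^(i) - E
   and min(m_{l,A}, mu A) <= alpha^(l) + E for every l, and these bounds force
   delta_{i,A} <= E; hence E >= Delta_q.  By residuation of the Goedel
   implication, eta_q(A) is the largest value on A compatible with
   S(x^(k)) <= alpha^(k) + Delta_q for all k, so a capacity fitting within
   Delta_q lies below eta_q on small sets and, by q-maxitivity, below mu*.
   Finally the sets minimising delta_i show that mu* fits within Delta_q. *)

Lemma le_min2 d (T : orderType d) (a b c e : T) :
  (a <= c -> b <= e -> Order.min a b <= Order.min c e)%O.
Proof. by move=> ac be; rewrite le_min !ge_min ac be orbT. Qed.

Section GoedelImplication.
Variable R : realType.

Lemma posp_le (t e : R) : 0 <= e -> (posp t <= e) = (t <= e).
Proof. by move=> e0; rewrite /posp ge_max e0 andbT. Qed.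

Lemma impG_ge0 (a b : R) : 0 <= b -> 0 <= impG a b.
Proof. by rewrite /impG; case: ifP. Qed.

Lemma impG_residuation (a b c : R) : c <= 1 -> (c <= impG a b) = (Num.min a c <= b).
Proof. by rewrite /impG ge_min; case: ifP => // _ ->. Qed.

End GoedelImplication.

Section Sugeno.
Variables (R : realType) (n q : nat).
Implicit Types (mu nu : {set 'I_n} -> R) (y : 'I_n -> R) (A B X Y : {set 'I_n}).

Lemma minset_le1 y A : Defs.minset y A <= 1.
Proof. exact: bigmin_le_id. Qed.

Lemma minset_ge0 y A : (forall i, 0 <= y i) -> 0 <= Defs.minset y A.
Proof. by move=> y0; apply: le_bigmin. Qed.

Lemma minset_anti y A B : A \subset B -> Defs.minset y B <= Defs.minset y A.
Proof.
move=> AB; apply: le_bigmin => [|i iA]; first exact: minset_le1.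
exact/bigmin_le_cond/(subsetP AB).
Qed.

Lemma le_sugeno mu y A : Num.min (Defs.minset y A) (mu A) <= sugeno mu y.
Proof. exact: (le_bigmax _ (fun B => Num.min (Defs.minset y B) (mu B))). Qed.

(* If the maximising set A0 is too large, q-maxitivity hands its value to a
   proper subset, on which the minimum of y can only be larger. *)
Lemma sugeno_attained_small mu y :
  (forall X, 0 <= mu X) -> q_maxitive q mu -> (forall i, 0 <= y i) ->
  exists2 A : {set 'I_n}, (#|A| <= q)%N & sugeno mu y = Num.min (Defs.minset y A) (mu A).
Proof.
move=> mu0 qmu y0.
have term_ge0 A : 0 <= Num.min (Defs.minset y A) (mu A) by rewrite le_min minset_ge0 ?mu0.
have [A0 _ SA0] := @eq_bigmax _ _ _ 0 set0 predT
  (fun A => Num.min (Defs.minset y A) (mu A)) isT (fun A _ => term_ge0 A).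
rewrite /sugeno SA0; case: (leqP #|A0| q) => [|qA0]; first by exists A0.
have set0_ok : (set0 \proper A0) && (#|(set0 : {set 'I_n})| <= q)%N.
  by rewrite cards0 andbT proper0 -card_gt0 (leq_ltn_trans _ qA0).
have [Y /andP[YA0 Yq] muA0] := @eq_bigmax _ _ _ 0 set0
  (fun Y : {set 'I_n} => (Y \proper A0) && (#|Y| <= q)%N) mu set0_ok (fun Y _ => mu0 Y).
exists Y => //; apply/le_anti/andP; split; last by rewrite -SA0; apply: le_sugeno.
by rewrite (qmu _ qA0) muA0 le_min2 // minset_anti // proper_sub.
Qed.

Lemma q_maxitive_le mu nu : q_maxitive q mu -> q_maxitive q nu ->
  (forall Y, (#|Y| <= q)%N -> mu Y <= nu Y) -> forall X, mu X <= nu X.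
Proof.
move=> qmu qnu le_small X; case: (leqP #|X| q) => [/le_small //|qX].
by rewrite (qmu _ qX) (qnu _ qX); apply: le_bigmax2 => Y /andP[_ /le_small].
Qed.

End Sugeno.

Section Fitting.
Variables (R : realType) (n N : nat) (x : 'I_N -> 'I_n -> R) (alpha : 'I_N -> R) (q : nat).
Hypothesis hx : forall k i, 0 <= x k i <= 1.
Hypothesis halpha : forall k, 0 <= alpha k <= 1.
Hypothesis hq : (1 <= q <= n)%N.
Implicit Types (mu : {set 'I_n} -> R) (A B X Y : {set 'I_n}).

Local Notation D := (Delta_q x alpha q).
Local Notation delta := (delta_iA x alpha).
Local Notation eta := (eta_q x alpha q).
Local Notation ms := (mu_star x alpha q).
Local Notation fit := (fit_error x alpha).

Lemma x_ge0 k i : 0 <= x k i. Proof. by case/andP: (hx k i). Qed.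
Lemma alpha_ge0 k : 0 <= alpha k. Proof. by case/andP: (halpha k). Qed.
Lemma alpha_le1 k : alpha k <= 1. Proof. by case/andP: (halpha k). Qed.

Lemma mk_ge0 k A : 0 <= mk x k A.
Proof. exact/minset_ge0/x_ge0. Qed.

Lemma Delta_ge0 : 0 <= D.
Proof. exact: bigmax_ge_id. Qed.

Lemma le_fit_error mu k : `|sugeno mu (x k) - alpha k| <= fit mu.
Proof. exact: (le_bigmax _ (fun k => `|sugeno mu (x k) - alpha k|)). Qed.

Lemma delta_iA_le_alpha i A : delta i A <= alpha i.
Proof.
have ai0 := alpha_ge0 i; rewrite /delta_iA ge_max posp_le //.
apply/andP; split; first by have := mk_ge0 i A; lra.
apply: bigmax_le => // l _; rewrite /sigmaG ge_min ler_pdivrMr // posp_le ?mulr_ge0 //.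
by apply/orP; left; have := alpha_ge0 l; lra.
Qed.

Lemma delta_i_attained i :
  exists2 A : {set 'I_n}, (0 < #|A| <= q)%N & delta_i x alpha q i = delta i A.
Proof.
case/andP: hq => q1 qn; pose j : 'I_n := Ordinal (leq_trans q1 qn).
have jq : (0 < #|[set j]| <= q)%N by rewrite cards1.
have [A Aq dA] := @eq_bigmin _ _ _ 1 [set j] (fun A : {set 'I_n} => (0 < #|A| <= q)%N)
  (delta i) jq (fun A _ => le_trans (delta_iA_le_alpha i A) (alpha_le1 i)).
by exists A.
Qed.

Lemma delta_i_le_alpha i : delta_i x alpha q i <= alpha i.
Proof. by have [A _ ->] := delta_i_attained i; apply: delta_iA_le_alpha. Qed.

Lemma delta_iA_le i A (c E : R) : 0 <= E ->
  (forall l, Num.min (mk x l A) c <= alpha l + E) ->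
  alpha i - E <= Num.min (mk x i A) c -> delta i A <= E.
Proof.
move=> E0 up; rewrite le_min => /andP[low_m low_c].
rewrite /delta_iA ge_max posp_le //; apply/andP; split; first lra.
apply: bigmax_le => // l _; rewrite /sigmaG ge_min ler_pdivrMr // posp_le ?mulr_ge0 //.
case: (lerP (alpha i - alpha l) (E * 2)) => // far.
rewrite posp_le //; move: (up l); rewrite ge_min => /orP[|]; lra.
Qed.

Theorem Delta_le_fit_error mu : is_capacity mu -> q_maxitive q mu -> D <= fit mu.
Proof.
move=> [mu0 _ mu01 _] qmu; have fit0 : 0 <= fit mu by apply: bigmax_ge_id.
apply: bigmax_le => // i _.
have mu_ge0 X : 0 <= mu X by case/andP: (mu01 X).
have [A Aq SA] := sugeno_attained_small mu_ge0 qmu (x_ge0 i).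
have low : alpha i - fit mu <= Num.min (mk x i A) (mu A).
  by have := le_fit_error mu i; rewrite ler_distl SA => /andP[].
have [A0|An0] := eqVneq A set0.
  move: low; rewrite A0 mu0 le_min => /andP[_ ai].
  by apply: le_trans (delta_i_le_alpha i) _; lra.
apply: le_trans (delta_iA_le fit0 _ low); first by apply: bigmin_le_cond; rewrite card_gt0 An0.
move=> l; have := le_fit_error mu l; rewrite ler_distl => /andP[_].
exact/le_trans/le_sugeno.
Qed.

Lemma eta_le1 A : eta A <= 1.
Proof. exact: bigmin_le_id. Qed.

Lemma eta_ge0 A : 0 <= eta A.
Proof.
apply: le_bigmin => // k _; apply: impG_ge0.
by rewrite le_min ler01 andbT addr_ge0 ?alpha_ge0 ?Delta_ge0.
Qed.

Lemma min_mk_eta_le k A : Num.min (mk x k A) (eta A) <= Num.min (alpha k + D) 1.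
Proof. by rewrite -impG_residuation ?eta_le1 //; apply: bigmin_le. Qed.

Lemma eta_mono A B : A \subset B -> eta A <= eta B.
Proof.
move=> AB; apply: le_bigmin => [|k _]; first exact: eta_le1.
rewrite impG_residuation ?eta_le1 //; apply: le_trans (min_mk_eta_le k A).
by rewrite le_min2 // minset_anti.
Qed.

Lemma delta_iA_le_eta k A : delta k A <= D -> alpha k - D <= Num.min (mk x k A) (eta A).
Proof.
have D0 := Delta_ge0; have ak1 := alpha_le1 k.
rewrite /delta_iA ge_max posp_le // => /andP[mkA sig].
rewrite le_min; apply/andP; split; first lra.
apply: le_bigmin => [|l _]; first lra.
rewrite impG_residuation; last lra.
have := le_trans (le_bigmax _ (fun l => sigmaG (alpha k) (mk x l A) (alpha l)) l) sig.
rewrite /sigmaG ge_min ler_pdivrMr // !posp_le ?mulr_ge0 // le_min !ge_min.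
case/orP=> [near|far].
  have -> : alpha k - D <= alpha l + D by lra.
  have -> : alpha k - D <= 1 by lra.
  by rewrite !orbT.
have -> : mk x l A <= alpha l + D by lra.
by rewrite minset_le1.
Qed.

Lemma le_eta mu : (forall X, mu X <= 1) ->
  (forall k, sugeno mu (x k) <= alpha k + D) -> forall A, mu A <= eta A.
Proof.
move=> mu1 Sup A; apply: le_bigmin => [|k _]; first exact: mu1.
rewrite impG_residuation // le_min (le_trans (le_sugeno _ _ A) (Sup k)) /=.
by rewrite ge_min mu1 orbT.
Qed.

Lemma mu_starE X :
  ms X = \big[Num.max/0]_(Y | [&& Y != set0, Y \subset X & (#|Y| <= q)%N]) eta Y.
Proof.
rewrite /mu_star; have [->|X0] := eqVneq X set0.
  by rewrite big_pred0 // => Y; rewrite subset0; case: eqVneq.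
case: leqP => [Xq|qX].
  apply/le_anti; rewrite (bigmax_sup X) ?X0 ?subxx ?Xq //=.
  by apply: bigmax_le => [|Y /and3P[_ YX _]]; [exact: eta_ge0 | exact: eta_mono].
apply: eq_bigl => Y; rewrite properEcard.
by case: (leqP #|Y| q) => Yq; rewrite ?(leq_ltn_trans Yq qX) ?andbT ?andbF.
Qed.

Lemma mu_star_small X : X != set0 -> (#|X| <= q)%N -> ms X = eta X.
Proof. by move=> X0 Xq; rewrite /mu_star (negbTE X0) Xq. Qed.

Lemma mu_star_ge0 X : 0 <= ms X.
Proof. by rewrite mu_starE bigmax_ge_id. Qed.

Lemma mu_star_le1 X : ms X <= 1.
Proof. by rewrite mu_starE; apply: bigmax_le => // Y _; apply: eta_le1. Qed.

Lemma eta_le_mu_star X Y : Y != set0 -> Y \subset X -> (#|Y| <= q)%N -> eta Y <= ms X.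
Proof. by move=> Y0 YX Yq; rewrite mu_starE; apply: (bigmax_sup Y); rewrite ?Y0 ?YX. Qed.

Lemma mu_star_le_eta A : (#|A| <= q)%N -> ms A <= eta A.
Proof.
move=> Aq; rewrite mu_starE.
by apply: bigmax_le => [|Y /and3P[_ YA _]]; [exact: eta_ge0 | exact: eta_mono].
Qed.

Lemma mu_star_mono X Y : X \subset Y -> ms X <= ms Y.
Proof.
move=> XY; rewrite !mu_starE; apply: sub_bigmax => Z /and3P[Z0 ZX Zq].
by rewrite Z0 Zq (subset_trans ZX XY).
Qed.

Lemma mu_star_q_maxitive : q_maxitive q ms.
Proof.
move=> X qX; apply: le_anti; apply/andP; split; last first.
  by apply: bigmax_le => [|Y /andP[/proper_sub YX _]]; [exact: mu_star_ge0 | exact: mu_star_mono].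
rewrite mu_starE; apply: bigmax_le => [|Y /and3P[Y0 YX Yq]]; first exact: bigmax_ge_id.
rewrite -mu_star_small //; apply: (bigmax_sup Y) => //.
by rewrite properEcard YX Yq (leq_ltn_trans Yq qX).
Qed.

Lemma mu_star_capacity :
  (exists A, #|A| = q /\ eta A = 1) -> is_capacity ms.
Proof.
case=> A [Aq etaA]; split => //.
- by rewrite /mu_star eqxx.
- apply/le_anti; rewrite mu_star_le1 -etaA eta_le_mu_star ?subsetT ?Aq //.
  by rewrite -card_gt0 Aq; case/andP: hq.
- by move=> X; rewrite mu_star_ge0 mu_star_le1.
- exact: mu_star_mono.
Qed.

Lemma sugeno_mu_star_ge k : alpha k - D <= sugeno ms (x k).
Proof.
have [A /andP[A0 Aq] dA] := delta_i_attained k.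
apply: le_trans (le_sugeno _ _ A); rewrite mu_star_small -?card_gt0 //.
by apply: delta_iA_le_eta; rewrite -dA; apply: le_bigmax.
Qed.

Lemma sugeno_mu_star_le k : sugeno ms (x k) <= alpha k + D.
Proof.
have [A Aq ->] := sugeno_attained_small mu_star_ge0 mu_star_q_maxitive (x_ge0 k).
have := min_mk_eta_le k A; rewrite le_min => /andP[le_aD _].
by apply: le_trans le_aD; rewrite le_min2 // mu_star_le_eta.
Qed.

Lemma fit_error_mu_star_le : fit ms <= D.
Proof.
apply: bigmax_le => [|k _]; first exact: Delta_ge0.
by rewrite ler_distl sugeno_mu_star_ge sugeno_mu_star_le.
Qed.

Theorem mu_star_greatest mu : is_capacity mu -> q_maxitive q mu ->
  fit mu <= D -> forall X, mu X <= ms X.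
Proof.
move=> [mu0 _ mu01 _] qmu fitD.
apply: q_maxitive_le qmu mu_star_q_maxitive _ => Y Yq.
have [->|Y0] := eqVneq Y set0; first by rewrite mu0 mu_star_ge0.
rewrite mu_star_small //; apply: le_eta => [X|k]; first by case/andP: (mu01 X).
by have := le_trans (le_fit_error mu k) fitD; rewrite ler_distl => /andP[_].
Qed.

End Fitting.

Theorem corollary2 (R : realType) (n N : nat)
  (x : 'I_N -> 'I_n -> R) (alpha : 'I_N -> R) (q : nat)
  (hx : forall k i, 0 <= x k i <= 1)
  (halpha : forall k, 0 <= alpha k <= 1)
  (hq : (1 <= q <= n)%N)
  (hA : exists A : {set 'I_n}, #|A| = q /\ eta_q x alpha q A = 1) :
  let mus := mu_star x alpha q in
  [/\ is_capacity mus, q_maxitive q mus,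
      fit_error x alpha mus = Delta_q x alpha q &
      forall mu : {set 'I_n} -> R,
        is_capacity mu -> q_maxitive q mu ->
        fit_error x alpha mu = Delta_q x alpha q ->
        forall X : {set 'I_n}, mu X <= mus X].
Proof.
move=> mus; have cap : is_capacity mus by exact: mu_star_capacity.
have qmax : q_maxitive q mus by exact: mu_star_q_maxitive.
split=> //.
- by apply/le_anti; rewrite fit_error_mu_star_le ?Delta_le_fit_error.
- by move=> mu capmu qmu fitmu; apply: mu_star_greatest => //; rewrite fitmu.
Qed.
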